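(* Let $n\ge 3$ and let $P_n(x)=x^n+a_{n-2}x^{n-2}+\cdots+a_1x+a_0$ be a real monic polynomial of degree $n$ whose coefficient of $x^{n-1}$ is zero. Put $P_{n-1}=\frac1n P_n'$ and define $R_{n-2}$ by $$P_n(x)=\frac{x}{n}P_n'(x)-R_{n-2}(x)=xP_{n-1}(x)-R_{n-2}(x).$$ Assume $P_{n-1}$ has $n-1$ distinct real roots $\alpha_1<\alpha_2<\cdots<\alpha_{n-1}$ and $R_{n-2}$ has $n-2$ distinct real roots $\beta_1<\cdots<\beta_{n-2}$. If $n$ is even, then $$\alpha_1<\beta_1<\alpha_2<\beta_2<\cdots<\alpha_{n-2}<\beta_{n-2}<\alpha_{n-1}$$ if and only if $$\max_{k\in\{1,\dots,\frac{n-2}{2}\}}R_{n-2}(\alpha_{2k})<0<\min_{k\in\{0,\dots,\frac{n-2}{2}\}}R_{n-2}(\alpha_{2k+1}).$$ If $n$ is odd, then the same interlacing holds if and only if $$\max_{k\in\{0,\dots,\frac{n-3}{2}\}}R_{n-2}(\alpha_{2k+1})<0<\min_{k\in\{1,\dots,\frac{n-1}{2}\}}R_{n-2}(\alpha_{2k}).$$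
   Context: All polynomials have real coefficients. $R_{n-2}(x)=xP_{n-1}(x)-P_n(x)=\sum_{k=0}^{n-2}\left(\tfrac{k}{n}-1\right)a_kx^k$. *)

From HB Require Import structures.
From mathcomp Require Import all_boot all_order all_algebra.
Set Implicit Arguments. Unset Strict Implicit. Unset Printing Implicit Defensive.
Import Order.TTheory GRing.Theory Num.Theory.
Local Open Scope ring_scope.

Definition Pnm1 (R : realFieldType) (n : nat) (P : {poly R}) : {poly R} :=
  (n%:R)^-1 *: P^`().

Definition Rnm2 (R : realFieldType) (n : nat) (P : {poly R}) : {poly R} :=
  'X * Pnm1 n P - P.

From HB Require Import structures.
From mathcomp Require Import all_boot all_order all_algebra.
From mathcomp Require Import ring lra zify.
Import Order.TTheory GRing.Theory Num.Theory Order.NatMonotonyTheory.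
Set Implicit Arguments.
Unset Strict Implicit.
Unset Printing Implicit Defensive.
Local Open Scope ring_scope.

(* P_{n-1} is monic of degree n - 1 with the n - 1
      distinct roots alpha_j, hence equals prod_j (X - alpha_j).  Newton's
      identity e_1^2 - 2 e_2 = sum_j alpha_j^2, where e_1 = 0 because
      a_{n-1} = 0, shows that (n - 2) times the coefficient c of x^(n-2) in
      R_{n-2} is a positive sum of squares; so R_{n-2} = c prod_i (X - beta_i)
      with c > 0.
   2. Sign counting.  Away from its roots, c prod_i (x - beta_i) has the sign
      (-1)^(number of beta_i above x).  Along alpha_1 < ... < alpha_M this
      number is nonincreasing and bounded by M - 1; it has the parity of M - j
      at alpha_j exactly when the signs alternate, and then it must equal
      M - j, which is the same as interlacing.
   3. With M = n - 1, the alternating sign condition splits into the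
      conditions on even and odd indices stated in the theorem. *)

Lemma incr_lt (R : realDomainType) (K : nat) (f : nat -> R) :
  (forall i, (1 <= i)%N -> (i < K)%N -> f i < f i.+1) ->
  forall i j, (1 <= i)%N -> (i < j)%N -> (j <= K)%N -> f i < f j.
Proof.
move=> f_incr i j i1 ij jK.
apply: (@homo_ltn_lt_in _ _ [pred k | 1 <= k <= K]%N); rewrite ?inE; try lia.
- by move=> a b; rewrite !inE => ha hb c /andP[]; rewrite !ltEnat inE; lia.
- by move=> k; rewrite !inE => ? ?; apply: f_incr; lia.
Qed.

Lemma incr_le (R : realDomainType) (K : nat) (f : nat -> R) :
  (forall i, (1 <= i)%N -> (i < K)%N -> f i < f i.+1) ->
  forall i j, (1 <= i)%N -> (i <= j)%N -> (j <= K)%N -> f i <= f j.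
Proof.
move=> f_incr i j i1; rewrite leq_eqVlt => /orP[/eqP <- // | ij] jK.
exact: ltW (incr_lt f_incr i1 ij jK).
Qed.

Lemma incr_uniq (R : realDomainType) (K : nat) (f : nat -> R) :
  (forall i, (1 <= i)%N -> (i < K)%N -> f i < f i.+1) ->
  uniq [seq f i | i <- iota 1 K].
Proof.
move=> f_incr; rewrite map_inj_in_uniq ?iota_uniq // => i j.
rewrite !mem_iota => hi hj fij.
have [ij|ji|//] := ltngtP i j.
- by have := incr_lt f_incr (i := i) (j := j); rewrite fij ltxx; lia.
- by have := incr_lt f_incr (i := j) (j := i); rewrite fij ltxx; lia.
Qed.

Lemma poly_of_roots (R : fieldType) (p : {poly R}) (s : seq R) (m : nat) (a : R) :
  uniq s -> all (root p) s -> size s = m -> (size p <= m.+1)%N -> p`_m = a ->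
  p = a *: \prod_(x <- s) ('X - x%:P).
Proof.
move=> s_uniq s_roots <- size_p <-.
have [q def_p] := uniq_roots_prod_XsubC s_roots (etrans (uniq_rootsE s) s_uniq).
rewrite {}def_p in size_p *.
have monic_s : \prod_(x <- s) ('X - x%:P) \is monic by exact: monic_prod_XsubC.
have size_q : (size q <= 1)%N.
  have [->|q_neq0] := eqVneq q 0; first by rewrite size_poly0.
  by move: size_p; rewrite size_Mmonic // size_prod_XsubC addnS /= -add1n leq_add2r.
rewrite (size1_polyC size_q) coefCM mul_polyC.
by move/monicP: monic_s; rewrite /lead_coef size_prod_XsubC => ->; rewrite mulr1.
Qed.

Lemma poly_of_incr_roots (R : realFieldType) (p : {poly R}) (m : nat)
    (f : nat -> R) (a : R) :
  (forall i, (1 <= i)%N -> (i < m)%N -> f i < f i.+1) ->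
  (forall x, root p x <-> exists2 i, (1 <= i <= m)%N & x = f i) ->
  (size p <= m.+1)%N -> p`_m = a ->
  p = a *: \prod_(x <- [seq f i | i <- iota 1 m]) ('X - x%:P).
Proof.
move=> f_incr p_roots; apply: poly_of_roots (incr_uniq f_incr) _ _.
  apply/allP => x /mapP[i]; rewrite mem_iota => i_range ->.
  by apply/p_roots; exists i => //; lia.
by rewrite size_map size_iota.
Qed.

Lemma coef_XsubC_mul (R : comNzRingType) (p : {poly R}) (x : R) (i : nat) :
  (('X - x%:P) * p)`_i.+1 = p`_i - x * p`_i.+1.
Proof. by rewrite mulrBl coefB coefXM coefCM. Qed.

(* Newton's identity e_1^2 - 2 e_2 = p_2: for p = prod_(z in s) (X - z) with
   m >= 2 roots, the sum of their squares is (p_(m-1))^2 - 2 p_(m-2). *)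
Lemma sum_sqr_roots (R : comNzRingType) (x y : R) (s : seq R) :
  let p := \prod_(z <- x :: y :: s) ('X - z%:P) in
  p`_(size s).+1 ^+ 2 - 2 * p`_(size s) = \sum_(z <- x :: y :: s) z ^+ 2.
Proof.
elim: s x y => [|z s IH] x y /=.
  rewrite !big_cons !big_nil !mulr1 addr0 coef_XsubC_mul coef0M
    !coefB !coefX !coefC /=; ring.
rewrite big_cons [in RHS]big_cons -IH !coef_XsubC_mul.
have lead1 : (\prod_(t <- y :: z :: s) ('X - t%:P))`_(size s).+2 = 1.
  have /monicP := monic_prod_XsubC (y :: z :: s) predT id.
  by rewrite /lead_coef size_prod_XsubC.
by rewrite lead1; ring.
Qed.

Lemma sum_sqr_gt0 (R : realDomainType) (s : seq R) :
  uniq s -> (2 <= size s)%N -> 0 < \sum_(x <- s) x ^+ 2.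
Proof.
case: s => [|x [|y s]] //= /andP[]; rewrite inE negb_or => /andP[x_neq_y _] _ _.
rewrite !big_cons addrA; apply: ltr_wpDr.
  by apply: sumr_ge0 => z _; exact: sqr_ge0.
move: x_neq_y; have [->|x_neq0] := eqVneq x 0 => [y_neq0|_].
  by rewrite expr0n add0r exprn_even_gt0 //= eq_sym.
by apply: ltr_pwDl; rewrite ?sqr_ge0 // exprn_even_gt0.
Qed.

Lemma sign_prod (R : realDomainType) (s : seq R) :
  0 \notin s -> 0 < (-1) ^+ count (fun x => x < 0) s * \prod_(x <- s) x.
Proof.
elim: s => [|x s IH]; first by rewrite big_nil mulr1 ltr01.
rewrite inE negb_or eq_sym big_cons /= exprD mulrACA => /andP[x_neq0 /IH s_pos].
apply: mulr_gt0 => //.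
have [x_neg|x_pos|x0] := ltrgtP x 0.
- by rewrite -[nat_of_bool true]/1%N expr1 mulN1r oppr_gt0.
- by rewrite -[nat_of_bool false]/0%N expr0 mul1r.
- by rewrite x0 eqxx in x_neq0.
Qed.

Lemma sign_pos_odd (R : realDomainType) (e : nat) (x : R) :
  0 < (-1) ^+ e * x <-> (if odd e then x < 0 else 0 < x).
Proof.
rewrite -signr_odd; case: (odd e); rewrite ?expr1 ?expr0 ?mul1r ?mulN1r //.
by rewrite oppr_gt0.
Qed.

(* A nonincreasing sequence of naturals whose parity alternates, ending at an
   index M with f 1 < M, must be f j = M - j on [1, M]: each step is a strict
   decrease, and there are exactly M - 1 steps below f 1 <= M - 1. *)
Lemma alternating_parity_count (M : nat) (f : nat -> nat) :
  (forall j, (1 <= j < M)%N -> (f j.+1 <= f j)%N) ->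
  (forall j, (1 <= j <= M)%N -> odd (f j) = odd (M - j)) ->
  (f 1 < M)%N ->
  forall j, (1 <= j <= M)%N -> f j = (M - j)%N.
Proof.
move=> f_noninc f_parity f1_lt j j_range.
have f_dec j' : (1 <= j' < M)%N -> (f j'.+1 < f j')%N.
  move=> j'_range; have := f_noninc j' j'_range.
  have := f_parity j' ltac:(lia); have := f_parity j'.+1 ltac:(lia); lia.
have upper j' : (1 <= j' <= M)%N -> (f j' + j' <= f 1 + 1)%N.
  elim: j' => [|j' IH] // j'_range; case: (posnP j') => [-> //|j'_pos].
  have := f_dec j' ltac:(lia); have := IH ltac:(lia); lia.
have lower d : (d < M)%N -> (d <= f (M - d))%N.
  elim: d => [|d IH] // d_lt.
  have := f_dec (M - d.+1)%N ltac:(lia); have := IH ltac:(lia).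
  by rewrite (_ : (M - d.+1).+1 = M - d)%N; lia.
have := upper j j_range; have := lower (M - j)%N ltac:(lia).
by rewrite (_ : M - (M - j) = j)%N; lia.
Qed.

Section Interlacing.

Variables (R : realFieldType) (N : nat) (alpha beta : nat -> R) (c : R).
Hypothesis alpha_incr : forall i, (1 <= i)%N -> (i < N.+1)%N -> alpha i < alpha i.+1.
Hypothesis beta_incr : forall i, (1 <= i)%N -> (i < N)%N -> beta i < beta i.+1.
Hypothesis c_gt0 : 0 < c.

Let r : {poly R} := c *: \prod_(x <- [seq beta i | i <- iota 1 N]) ('X - x%:P).

Definition count_above (x : R) : nat := count (fun i => x < beta i) (iota 1 N).

Lemma count_above_le (x : R) (j : nat) : (j <= N)%N ->
  (forall i, (1 <= i <= j)%N -> beta i <= x) -> (count_above x <= N - j)%N.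
Proof.
move=> j_le below; rewrite /count_above -(subnKC j_le) iotaD count_cat.
have -> : count (fun i => x < beta i) (iota 1 j) = 0%N.
  apply/eqP; rewrite -leqn0 leqNgt -has_count; apply/hasPn => i.
  by rewrite mem_iota -leNgt => i_range; apply: below; lia.
by rewrite add0n (leq_trans (count_size _ _)) // size_iota; lia.
Qed.

Lemma count_above_ge (x : R) (j : nat) : (1 <= j <= N.+1)%N ->
  (forall i, (j <= i <= N)%N -> x < beta i) -> (N.+1 - j <= count_above x)%N.
Proof.
move=> j_range above; have j'_le : (j.-1 <= N)%N by lia.
rewrite /count_above -(subnKC j'_le) iotaD count_cat.
have -> : count (fun i => x < beta i) (iota (1 + j.-1) (N - j.-1)) =
          size (iota (1 + j.-1) (N - j.-1)).
  apply/eqP; rewrite -all_count; apply/allP => i.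
  by rewrite mem_iota => i_range; apply: above; lia.
by rewrite size_iota; lia.
Qed.

Lemma count_above_antimono (x y : R) :
  x <= y -> (count_above y <= count_above x)%N.
Proof. by move=> xy; apply: sub_count => i /=; apply: le_lt_trans. Qed.

Lemma sign_count_above (x : R) : (forall i, (1 <= i <= N)%N -> x != beta i) ->
  0 < (-1) ^+ count_above x * r.[x].
Proof.
move=> x_not_root; rewrite /r hornerZ horner_prod big_map mulrCA.
apply: mulr_gt0 => //.
under eq_bigr do rewrite hornerXsubC.
rewrite -(big_map (fun i => x - beta i) xpredT id) /count_above.
have -> : count (fun i => x < beta i) (iota 1 N) =
          count (fun y => y < 0) [seq x - beta i | i <- iota 1 N].
  by rewrite count_map; apply: eq_count => i /=; rewrite subr_lt0.
apply: sign_prod; apply/mapP => -[i]; rewrite mem_iota => i_range.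
by move/eqP; rewrite eq_sym subr_eq0; apply/negP/x_not_root; lia.
Qed.

Lemma root_r (i : nat) : (1 <= i <= N)%N -> r.[beta i] = 0.
Proof.
move=> i_range; rewrite /r hornerZ horner_prod; apply/eqP.
rewrite mulf_eq0 prodf_seq_eq0; apply/orP; right; apply/hasP.
exists (beta i); first by apply: map_f; rewrite mem_iota; lia.
by rewrite /= hornerXsubC subrr.
Qed.

Definition interlaced : Prop :=
  forall i, (1 <= i <= N)%N -> alpha i < beta i /\ beta i < alpha i.+1.

(* Interlacing pins down the number of roots above each alpha_j. *)
Lemma interlaced_signs : interlaced ->
  forall j, (1 <= j <= N.+1)%N -> 0 < (-1) ^+ (N.+1 - j) * r.[alpha j].
Proof.
move=> inter j j_range.
have beta_below i : (1 <= i < j)%N -> beta i < alpha j.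
  move=> i_range; apply: (lt_le_trans (proj2 (inter i _))); first lia.
  by apply: (incr_le alpha_incr); lia.
have beta_above i : (j <= i <= N)%N -> alpha j < beta i.
  move=> i_range; apply: (le_lt_trans _ (proj1 (inter i _))); last lia.
  by apply: (incr_le alpha_incr); lia.
have count_eq : count_above (alpha j) = (N.+1 - j)%N.
  apply/eqP; rewrite eqn_leq; apply/andP; split.
    rewrite (_ : N.+1 - j = N - j.-1)%N; last lia.
    by apply: count_above_le => [|i i_range]; [lia | apply/ltW/beta_below; lia].
  exact: count_above_ge.
rewrite -count_eq; apply: sign_count_above => i i_range.
have [ij|ji] := ltnP i j.
  by rewrite gt_eqF // beta_below; lia.
by rewrite lt_eqF // beta_above; lia.
Qed.

(* Conversely, the alternating signs force the counts N + 1 - j, from which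
   the position of every beta_i between the alpha's is read off. *)
Lemma signs_interlaced :
  (forall j, (1 <= j <= N.+1)%N -> 0 < (-1) ^+ (N.+1 - j) * r.[alpha j]) ->
  interlaced.
Proof.
move=> signs.
have not_root j i : (1 <= j <= N.+1)%N -> (1 <= i <= N)%N -> alpha j != beta i.
  move=> j_range i_range; apply/eqP => eq_ji.
  by have := signs j j_range; rewrite eq_ji root_r // mulr0 ltxx.
have count_eq : forall j, (1 <= j <= N.+1)%N -> count_above (alpha j) = (N.+1 - j)%N.
  apply: alternating_parity_count => [j j_range | j j_range |].
  - by apply/count_above_antimono/ltW/alpha_incr; lia.
  - have := sign_count_above (not_root j ^~ j_range); have := signs j j_range.
    by rewrite !sign_pos_odd; do 2!case: odd => //; move=> ? ?; lra.
  - by rewrite ltnS (leq_trans (count_size _ _)) ?size_iota.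
move=> i i_range; split; rewrite ltNge; apply/negP => wrong.
-
  have below k : (1 <= k <= i)%N -> beta k <= alpha i.
    by move=> k_range; apply: le_trans wrong; apply: (incr_le beta_incr); lia.
  have := count_above_le (ltac:(lia) : (i <= N)%N) below.
  by rewrite count_eq; lia.
-
  have above k : (i <= k <= N)%N -> alpha i.+1 < beta k.
    move=> k_range; rewrite lt_neqAle not_root //=; try lia.
    by apply: le_trans wrong _; apply: (incr_le beta_incr); lia.
  have := count_above_ge (ltac:(lia) : (1 <= i <= N.+1)%N) above.
  by rewrite count_eq; lia.
Qed.

Theorem interlaced_iff_signs :
  interlaced <->
  (forall j, (1 <= j <= N.+1)%N -> 0 < (-1) ^+ (N.+1 - j) * r.[alpha j]).
Proof. by split; [exact: interlaced_signs | exact: signs_interlaced]. Qed.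

End Interlacing.

Lemma coef_Pnm1 (R : realFieldType) (n : nat) (P : {poly R}) (k : nat) :
  (Pnm1 n P)`_k = (n%:R)^-1 * (P`_k.+1 *+ k.+1).
Proof. by rewrite /Pnm1 coefZ coef_deriv. Qed.

Lemma coef_Rnm2 (R : realFieldType) (n : nat) (P : {poly R}) (k : nat) :
  (n%:R : R) != 0 -> (Rnm2 n P)`_k = (k%:R / n%:R - 1) * P`_k.
Proof.
move=> n_neq0; rewrite /Rnm2 coefB coefXM.
case: k => [|k] /=; first by rewrite mul0r; ring.
by rewrite coef_Pnm1 -mulr_natr; field.
Qed.

Lemma lead_Pnm1 (R : realFieldType) (n : nat) (P : {poly R}) :
  (0 < n)%N -> size P = n.+1 -> P \is monic -> (Pnm1 n P)`_n.-1 = 1.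
Proof.
move=> n_gt0 size_P /monicP; rewrite /lead_coef size_P coef_Pnm1 prednK // => ->.
by rewrite mulVf // pnatr_eq0 -lt0n.
Qed.

Lemma size_Pnm1 (R : realFieldType) (n : nat) (P : {poly R}) :
  size P = n.+1 -> (size (Pnm1 n P) <= n)%N.
Proof.
move=> size_P; apply/leq_sizeP => k k_ge.
by rewrite coef_Pnm1 nth_default ?mul0rn ?mulr0 // size_P.
Qed.

(* ... and R_{n-2} has degree at most n - 2: its coefficient of x^n is
   (n/n - 1) a_n = 0, that of x^(n-1) vanishes because a_{n-1} = 0. *)
Lemma size_Rnm2 (R : realFieldType) (n : nat) (P : {poly R}) :
  (0 < n)%N -> size P = n.+1 -> P`_n.-1 = 0 -> (size (Rnm2 n P) <= n.-1)%N.
Proof.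
move=> n_gt0 size_P coef_P_subleading.
have n_neq0 : (n%:R : R) != 0 by rewrite pnatr_eq0 -lt0n.
apply/leq_sizeP => k k_ge; rewrite coef_Rnm2 //.
have [k_small|k_big] := ltnP k n.+1; last by rewrite nth_default ?mulr0 ?size_P.
have [->|->] : k = n.-1 \/ k = n by lia.
  by rewrite coef_P_subleading mulr0.
by rewrite divff // subrr mul0r.
Qed.

(* Newton's identity applied to the roots s of P_{n-1}: since a_{n-1} = 0,
   the sum of their squares is -2 (n-2)/n a_{n-2} = (n - 2) lead(R_{n-2}). *)
Lemma sum_sqr_roots_Pnm1 (R : realFieldType) (n : nat) (P : {poly R})
    (s : seq R) :
  (3 <= n)%N -> P`_n.-1 = 0 ->
  size s = n.-1 -> Pnm1 n P = \prod_(x <- s) ('X - x%:P) ->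
  \sum_(x <- s) x ^+ 2 = (n.-2)%:R * (Rnm2 n P)`_n.-2.
Proof.
move=> n_ge3 coef_P_subleading.
case: s => [|x [|y s]] //= [size_s] Pnm1E; try lia.
have n_eq : (n%:R : R) = (n.-2)%:R + 2 by rewrite -natrD; congr (_%:R); lia.
have n_neq0 : (n%:R : R) != 0 by rewrite pnatr_eq0; lia.
rewrite -sum_sqr_roots -Pnm1E !coef_Pnm1 coef_Rnm2 // size_s.
rewrite coef_P_subleading (_ : (size s).+1 = n.-2)%N; last lia.
by rewrite mul0rn mulr0 -mulr_natr n_eq; field; rewrite -n_eq.
Qed.

Lemma coef_Rnm2_gt0 (R : realFieldType) (n : nat) (P : {poly R}) (s : seq R) :
  (3 <= n)%N -> P`_n.-1 = 0 -> uniq s -> size s = n.-1 ->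
  Pnm1 n P = \prod_(x <- s) ('X - x%:P) -> 0 < (Rnm2 n P)`_n.-2.
Proof.
move=> n_ge3 coef_P_subleading s_uniq size_s Pnm1E.
have size_ge2 : (2 <= size s)%N by lia.
have := sum_sqr_gt0 s_uniq size_ge2.
by rewrite (sum_sqr_roots_Pnm1 n_ge3 coef_P_subleading size_s Pnm1E)
  pmulr_rgt0 // ltr0n; lia.
Qed.

Lemma alternating_signs_odd (R : realDomainType) (M : nat) (f : nat -> R) :
  odd M ->
  (forall j, (1 <= j <= M)%N -> 0 < (-1) ^+ (M - j) * f j) <->
  (forall k, (1 <= k <= M./2)%N -> f k.*2 < 0) /\
  (forall k, (k <= M./2)%N -> 0 < f k.*2.+1).
Proof.
move=> M_odd; split => [signs | [even_neg odd_pos] j j_range].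
  split=> k k_range.
    have := signs k.*2 ltac:(lia); rewrite sign_pos_odd.
    by rewrite (_ : odd (M - k.*2) = true) //; lia.
  have := signs k.*2.+1 ltac:(lia); rewrite sign_pos_odd.
  by rewrite (_ : odd (M - k.*2.+1) = false) //; lia.
rewrite sign_pos_odd; have [j_odd|j_even] := boolP (odd j).
  have j_eq : j = (j./2).*2.+1 by lia.
  rewrite j_eq (_ : odd (M - (j./2).*2.+1) = false); last lia.
  by apply: odd_pos; lia.
have j_eq : j = (j./2).*2 by lia.
rewrite j_eq (_ : odd (M - (j./2).*2) = true); last lia.
by apply: even_neg; lia.
Qed.

Lemma alternating_signs_even (R : realDomainType) (M : nat) (f : nat -> R) :
  ~~ odd M -> (0 < M)%N ->
  (forall j, (1 <= j <= M)%N -> 0 < (-1) ^+ (M - j) * f j) <->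
  (forall k, (k <= (M.-2)./2)%N -> f k.*2.+1 < 0) /\
  (forall k, (1 <= k <= M./2)%N -> 0 < f k.*2).
Proof.
move=> M_even M_gt0; split => [signs | [odd_neg even_pos] j j_range].
  split=> k k_range.
    have := signs k.*2.+1 ltac:(lia); rewrite sign_pos_odd.
    by rewrite (_ : odd (M - k.*2.+1) = true) //; lia.
  have := signs k.*2 ltac:(lia); rewrite sign_pos_odd.
  by rewrite (_ : odd (M - k.*2) = false) //; lia.
rewrite sign_pos_odd; have [j_odd|j_even] := boolP (odd j).
  have j_eq : j = (j./2).*2.+1 by lia.
  rewrite j_eq (_ : odd (M - (j./2).*2.+1) = true); last lia.
  by apply: odd_neg; lia.
have j_eq : j = (j./2).*2 by lia.
rewrite j_eq (_ : odd (M - (j./2).*2) = false); last lia.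
by apply: even_pos; lia.
Qed.

Theorem proposition1 (R : realFieldType) (n : nat) (P : {poly R})
  (alpha beta : nat -> R) :
  (3 <= n)%N ->
  size P = n.+1 -> P \is monic -> P`_n.-1 = 0 ->
  (forall i, (1 <= i)%N -> (i < n.-1)%N -> alpha i < alpha i.+1) ->
  (forall x, root (Pnm1 n P) x <-> exists2 i, (1 <= i <= n.-1)%N & x = alpha i) ->
  (forall i, (1 <= i)%N -> (i < n.-2)%N -> beta i < beta i.+1) ->
  (forall x, root (Rnm2 n P) x <-> exists2 i, (1 <= i <= n.-2)%N & x = beta i) ->
  (~~ odd n ->
     ((forall i, (1 <= i <= n.-2)%N -> alpha i < beta i /\ beta i < alpha i.+1)
      <->
      ((forall k, (1 <= k <= (n.-2)./2)%N -> (Rnm2 n P).[alpha k.*2] < 0) /\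
       (forall k, (k <= (n.-2)./2)%N -> 0 < (Rnm2 n P).[alpha k.*2.+1])))) /\
  (odd n ->
     ((forall i, (1 <= i <= n.-2)%N -> alpha i < beta i /\ beta i < alpha i.+1)
      <->
      ((forall k, (k <= (n - 3)./2)%N -> (Rnm2 n P).[alpha k.*2.+1] < 0) /\
       (forall k, (1 <= k <= (n.-1)./2)%N -> 0 < (Rnm2 n P).[alpha k.*2])))).
Proof.
move=> n_ge3 size_P monic_P coef_P_subleading alpha_incr alpha_roots
  beta_incr beta_roots.
have n_gt0 : (0 < n)%N by lia.
have n1_eq : n.-1 = n.-2.+1 by lia.
pose A := [seq alpha i | i <- iota 1 n.-1].
have Pnm1E : Pnm1 n P = \prod_(x <- A) ('X - x%:P).
  rewrite -[RHS]scale1r; apply: poly_of_incr_roots alpha_incr alpha_roots _ _.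
    by rewrite prednK ?(size_Pnm1 size_P).
  exact: lead_Pnm1.
have c_gt0 : 0 < (Rnm2 n P)`_n.-2.
  apply: (coef_Rnm2_gt0 n_ge3 coef_P_subleading _ _ Pnm1E).
    exact: incr_uniq alpha_incr.
  by rewrite size_map size_iota.
have Rnm2E : Rnm2 n P = (Rnm2 n P)`_n.-2 *:
    \prod_(x <- [seq beta i | i <- iota 1 n.-2]) ('X - x%:P).
  apply: poly_of_incr_roots beta_incr beta_roots _ _ => //.
  by rewrite -n1_eq size_Rnm2.
rewrite n1_eq in alpha_incr.
have := interlaced_iff_signs alpha_incr beta_incr c_gt0.
rewrite /interlaced -Rnm2E => ->.
split=> n_parity.
  rewrite (_ : (n.-2)./2 = (n.-2.+1)./2); last lia.
  by apply: alternating_signs_odd; lia.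
rewrite (_ : (n - 3)./2 = (n.-2.+1).-2./2) 1?(_ : (n.-1)./2 = (n.-2.+1)./2);
  try lia.
by apply: alternating_signs_even; lia.
Qed.
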